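(* Let $G$ be a subgroup of $O_d(\mathbb R)$, let $\Omega$ be a finite set and let \[\mathcal M=\{\boldsymbol\xi=(\xi_\omega)_{\omega\in\Omega}\in(\mathbb R^d)^\Omega:\ \text{the }\xi_\omega\text{ are pairwise distinct and }\boldsymbol\xi\text{ is }G\text{-invariant}\}.\] Then $\mathcal M$ is a submanifold of $(\mathbb R^d)^\Omega$.
   Context: A family $\boldsymbol\xi=(\xi_\omega)_{\omega\in\Omega}\in(\mathbb R^d)^\Omega$ is $G$-invariant if for every $R\in G$ there is a map $\chi(R):\Omega\to\Omega$ with $R\xi_\omega=\xi_{\chi(R)\omega}$ for all $\omega\in\Omega$. *)

From HB Require Import structures.
From mathcomp Require Import all_boot all_order all_algebra.
From mathcomp Require Import all_classical all_reals all_analysis.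
Set Implicit Arguments. Unset Strict Implicit. Unset Printing Implicit Defensive.
Import Order.TTheory GRing.Theory Num.Theory.
Import numFieldNormedType.Exports.
Local Open Scope classical_set_scope.
Local Open Scope ring_scope.

Definition orthogonal_subgroup (R : realType) (d : nat) (G : set 'M[R]_d) :=
  [/\ G 1%:M,
      (forall A B, G A -> G B -> G (A *m B)),
      (forall A, G A -> G (invmx A)) &
      (forall A, G A -> A *m A^T = 1%:M)].

(* A point of (R^d)^Omega is stored as a matrix with #|Omega| rows; the
   vector xi_omega is the row of index (enum_rank omega), viewed as a
   column vector via transposition. *)
Definition xi_at (R : realType) (Omega : finType) (d : nat)
  (xi : 'M[R]_(#|Omega|, d)) (w : Omega) : 'cV[R]_d :=
  (row (enum_rank w) xi)^T.

Definition G_invariant (R : realType) (Omega : finType) (d : nat)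
  (G : set 'M[R]_d) (xi : 'M[R]_(#|Omega|, d)) :=
  forall A, G A -> exists chi : Omega -> Omega,
    forall w, A *m xi_at xi w = xi_at xi (chi w).

Definition calM (R : realType) (Omega : finType) (d : nat)
  (G : set 'M[R]_d) : set 'M[R]_(#|Omega|, d) :=
  [set xi | (forall w w', w <> w' -> xi_at xi w <> xi_at xi w')
            /\ G_invariant G xi].

Fixpoint iter_D (R : realType) (V : normedModType R)
  (vs : seq V) (f : V -> V) : V -> V :=
  match vs with
  | [::] => f
  | v :: vs' => fun x => 'D_v (iter_D vs' f) x
  end.

Definition smooth_on (R : realType) (V : normedModType R)
  (U : set V) (f : V -> V) :=
  (forall vs v x, U x -> derivable (iter_D vs f) x v) /\
  (forall vs x, U x -> {for x, continuous (iter_D vs f)}).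

Definition diffeo_on (R : realType) (V : normedModType R)
  (U W : set V) (phi psi : V -> V) :=
  [/\ open U, open W, smooth_on U phi & smooth_on W psi] /\
  [/\ phi @` U = W,
      (forall x, U x -> psi (phi x) = x) &
      (forall y, W y -> phi (psi y) = y)].

(* Embedded C^infinity submanifold of the finite-dimensional space of
   matrices: every point of M has an open neighbourhood U and a
   diffeomorphism of U onto an open set W straightening M /\ U onto
   W /\ L for a linear subspace L (dimension may vary with the point). *)
Definition is_submanifold (R : realType) (m n : nat)
  (M : set 'M[R]_(m, n)) :=
  forall p, M p -> exists (U W : set 'M[R]_(m, n)) (phi psi : 'M[R]_(m, n) -> 'M[R]_(m, n))
    (L : {vspace 'M[R]_(m, n)}),
    [/\ U p, diffeo_on U W phi psi &
        phi @` (M `&` U) = W `&` [set y | y \in L]].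

From HB Require Import structures.
From mathcomp Require Import all_boot all_order all_algebra.
From mathcomp Require Import all_classical all_reals all_analysis.
From mathcomp Require Import lra.
Set Implicit Arguments. Unset Strict Implicit. Unset Printing Implicit Defensive.
Import Order.TTheory GRing.Theory Num.Theory.
Import numFieldNormedType.Exports.
Local Open Scope classical_set_scope.
Local Open Scope ring_scope.

(* Let [p] be a point of [calM G] and [delta] the least distance between two of
   its vectors.  An orthogonal [A] moves vectors by at most [d] times as much
   (in the max norm), so if [y] is within [delta / (d + 2)] of [p], the
   permutation by which [A] acts on the vectors of [y] can only be the one by
   which it acts on those of [p], and the vectors of [y] stay distinct.  Hence,
   near [p], [calM G] is the set of [y] sharing every symmetry of [p] with the same
   permutation: a linear subspace, straightened by the identity chart. *)

Lemma span_lincomb_closed (K : fieldType) (vT : vectType K) (S : set vT) (s : seq vT) :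
  S 0 -> (forall a x y, S x -> S y -> S (a *: x + y)) ->
  (forall x, x \in s -> S x) -> forall y, y \in span s -> S y.
Proof.
move=> S0 S_lin sS y /(@coord_span _ _ _ (in_tuple s)) ->.
apply: (big_ind S) => // [x z Sx Sz|i _].
  by have := S_lin 1 x z Sx Sz; rewrite scale1r.
have s_i : S (in_tuple s)`_i by apply/sS; rewrite mem_nth // size_tuple.
by have := S_lin (coord (in_tuple s) i y) _ 0 s_i S0; rewrite addr0.
Qed.

(* [S] is the span of any family in [S] whose span has maximal dimension. *)
Lemma vspace_of_lincomb_closed (K : fieldType) (vT : vectType K) (S : set vT) :
  S 0 -> (forall a x y, S x -> S y -> S (a *: x + y)) ->
  exists L : {vspace vT}, [set y | y \in L] = S.
Proof.
move=> S0 S_lin.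
pose rank_in_S n :=
  `[< exists2 s : seq vT, (forall x, x \in s -> S x) & \dim (span s) = n >].
have rank0 : exists n, rank_in_S n.
  by exists 0%N; apply/asboolP; exists [::] => //; rewrite span_nil dimv0.
have rank_bounded n : rank_in_S n -> (n <= \dim (fullv : {vspace vT}))%N.
  by move=> /asboolP [s _ <-]; apply/dimvS/subvf.
have [n /asboolP [s sS <-] rank_max] := ex_maxnP rank0 rank_bounded.
exists (span s); apply/seteqP; split=> y; first exact: span_lincomb_closed.
move=> Sy; have span_sub : (span s <= span (y :: s))%VS by rewrite span_cons addvSr.
have span_dim : (\dim (span (y :: s)) <= \dim (span s))%N.
  apply/rank_max/asboolP; exists (y :: s) => // x.
  by rewrite inE => /orP [/eqP ->|/sS].
have /eqP -> : span s == span (y :: s).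
  by rewrite -(dimv_leqif_eq span_sub).2 eqn_leq span_dim dimvS.
by apply: memv_span; rewrite mem_head.
Qed.

Lemma iter_D_id_or_cst (R : realType) (V : normedModType R) (vs : seq V) :
  iter_D vs id = id \/ exists c : V, iter_D vs id = cst c.
Proof.
elim: vs => [|v vs [IH|[c IH]]] /=; first by left.
  by right; exists v; apply/funext => x; rewrite IH derive_id.
by right; exists 0; apply/funext => x; rewrite IH derive_cst.
Qed.

Lemma smooth_on_id (R : realType) (V : normedModType R) (U : set V) :
  smooth_on U id.
Proof.
split=> vs; case: (iter_D_id_or_cst vs) => [->|[c ->]].
- by move=> v x _; apply: derivable_id.
- by move=> v x _; apply: derivable_cst.
- by move=> x _; exact: cvg_id.
- by move=> x _; apply: cst_continuous.
Qed.

Lemma locally_linear_submanifold (R : realType) (m n : nat) (M : set 'M[R]_(m, n)) :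
  (forall p, M p -> exists (e : R) (L : {vspace 'M[R]_(m, n)}),
     0 < e /\ M `&` ball p e = [set y | y \in L] `&` ball p e) ->
  is_submanifold M.
Proof.
move=> Mlin p Mp; have [e [L [e_gt0 ME]]] := Mlin p Mp.
exists (ball p e), (ball p e), id, id, L; split.
- exact: ballxx.
- by split; split; rewrite ?image_id //; [exact: ball_open|exact: ball_open|
    exact: smooth_on_id|exact: smooth_on_id].
- by rewrite image_id ME setIC.
Qed.

Section MatrixNorm.
Variable R : realType.

Lemma mx_entry_norm_le m n (M : 'M[R]_(m, n)) i j : `|M i j| <= `|M|.
Proof.
rewrite [`|M|]mx_normrE.
exact: (le_bigmax _ (fun ij : 'I_m * 'I_n => `|M ij.1 ij.2|) (i, j)).
Qed.

Lemma mx_norm_le_entries m n (M : 'M[R]_(m, n)) c :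
  0 <= c -> (forall i j, `|M i j| <= c) -> `|M| <= c.
Proof. by move=> c_ge0 Mc; rewrite [`|M|]mx_normrE; apply: bigmax_le => // ij _. Qed.

Lemma orthogonal_entry_norm_le1 d (A : 'M[R]_d) i j :
  A *m A^T = 1%:M -> `|A i j| <= 1.
Proof.
move=> A_orth.
have row_sq : \sum_k A i k ^+ 2 = 1.
  have := congr1 (fun M : 'M[R]_d => M i i) A_orth; rewrite !mxE eqxx /= => row_dot.
  rewrite -[RHS]row_dot.
  by apply: eq_bigr => k _; rewrite !mxE expr2.
have entry_sq : A i j ^+ 2 <= 1.
  rewrite -row_sq (bigD1 j) //= lerDl; apply: sumr_ge0 => k _; exact: sqr_ge0.
by rewrite -(@expr_le1 _ 2) // real_normK // num_real.
Qed.

Lemma norm_mulmx_le m n k (A : 'M[R]_(m, n)) (v : 'M[R]_(n, k)) :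
  (forall i j, `|A i j| <= 1) -> `|A *m v| <= n%:R * `|v|.
Proof.
move=> A_le1; apply: mx_norm_le_entries => [|i j]; first by rewrite mulr_ge0.
have -> : n%:R * `|v| = \sum_(l < n) `|v| by rewrite sumr_const card_ord mulr_natl.
rewrite mxE; apply: le_trans (ler_norm_sum _ _ _) (ler_sum _ _) => l _.
by rewrite normrM -[X in _ <= X]mul1r ler_pM ?mx_entry_norm_le.
Qed.

Lemma xi_atP (Omega : finType) d a (x y : 'M[R]_(#|Omega|, d)) w :
  xi_at (a *: x + y) w = a *: xi_at x w + xi_at y w.
Proof. by rewrite /xi_at !linearP. Qed.

Lemma norm_xi_at_le (Omega : finType) d (x : 'M[R]_(#|Omega|, d)) w :
  `|xi_at x w| <= `|x|.
Proof. by apply: mx_norm_le_entries => // i j; rewrite !mxE mx_entry_norm_le. Qed.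

Lemma dist_xi_at_le (Omega : finType) d (x y : 'M[R]_(#|Omega|, d)) w :
  `|xi_at x w - xi_at y w| <= `|x - y|.
Proof. by rewrite /xi_at -!linearB norm_xi_at_le. Qed.

End MatrixNorm.

Section LocalStructure.
Variables (R : realType) (d : nat) (G : set 'M[R]_d) (Omega : finType).
Hypothesis G_orth : forall A, G A -> A *m A^T = 1%:M.
Implicit Types (p y : 'M[R]_(#|Omega|, d)) (w : Omega).

Definition inherits_symmetries p y :=
  forall A, G A -> forall chi : Omega -> Omega,
    (forall w, A *m xi_at p w = xi_at p (chi w)) ->
    forall w, A *m xi_at y w = xi_at y (chi w).

Lemma inherits_symmetries_vspace p :
  exists L : {vspace 'M[R]_(#|Omega|, d)}, [set y | y \in L] = inherits_symmetries p.
Proof.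
apply: vspace_of_lincomb_closed.
- by move=> A _ chi _ w; rewrite /xi_at !linear0.
move=> a x y x_sym y_sym A GA chi p_chi w.
by rewrite !xi_atP mulmxDr -scalemxAr (x_sym A GA chi p_chi) (y_sym A GA chi p_chi).
Qed.

(* The cap [1] only matters when [Omega] has fewer than two points. *)
Definition min_gap p :=
  \big[Order.min/1]_(ww : Omega * Omega | ww.1 != ww.2) `|xi_at p ww.1 - xi_at p ww.2|.

Lemma min_gap_gt0 p :
  (forall w w', w <> w' -> xi_at p w <> xi_at p w') -> 0 < min_gap p.
Proof.
move=> p_inj; apply: lt_bigmin => // ww /eqP ww_neq.
by rewrite normr_gt0 subr_eq0; apply/eqP/p_inj.
Qed.

Lemma eq_of_lt_min_gap p u v : `|xi_at p u - xi_at p v| < min_gap p -> u = v.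
Proof.
apply: contra_ltP => /eqP uv.
exact: (bigmin_le_cond _ (fun ww : Omega * Omega => `|xi_at p ww.1 - xi_at p ww.2|)
  (j := (u, v))).
Qed.

Section NearPoint.
Variables p y : 'M[R]_(#|Omega|, d).
Hypothesis y_near_p : (d%:R + 2) * `|p - y| < min_gap p.

Lemma near_xi_at_inj w w' : w <> w' -> xi_at y w <> xi_at y w'.
Proof.
move=> ww' yww'; apply/ww'/eq_of_lt_min_gap; apply: le_lt_trans y_near_p.
have := ler_distD (xi_at y w) (xi_at p w) (xi_at p w').
have := dist_xi_at_le p y w; have := dist_xi_at_le y p w'.
rewrite yww' [`|y - p|]distrC; have : 0 <= d%:R * `|p - y| by [].
lra.
Qed.

Lemma near_invariant_inherits : G_invariant G y -> inherits_symmetries p y.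
Proof.
move=> y_inv A GA chi p_chi w; have [chi' y_chi'] := y_inv A GA.
rewrite y_chi'; congr xi_at.
apply/eq_of_lt_min_gap; apply: le_lt_trans y_near_p.
have moved_le : `|xi_at y (chi' w) - xi_at p (chi w)| <= d%:R * `|p - y|.
  rewrite -y_chi' -p_chi -mulmxBr.
  apply: le_trans (norm_mulmx_le _ _) _ => [i j|].
    exact: orthogonal_entry_norm_le1 (G_orth GA).
  by rewrite ler_wpM2l // distrC dist_xi_at_le.
have := ler_distD (xi_at y (chi' w)) (xi_at p (chi' w)) (xi_at p (chi w)).
have := dist_xi_at_le p y (chi' w); have : 0 <= `|p - y| by [].
lra.
Qed.

End NearPoint.

Definition gap_radius p := min_gap p / (d%:R + 2).

Lemma gap_radius_gt0 p :
  (forall w w', w <> w' -> xi_at p w <> xi_at p w') -> 0 < gap_radius p.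
Proof. by move=> p_inj; rewrite divr_gt0 ?min_gap_gt0 ?ltr_wpDl. Qed.

Lemma ball_gap_radius p y :
  ball p (gap_radius p) y -> (d%:R + 2) * `|p - y| < min_gap p.
Proof. by rewrite -ball_normE /= ltr_pdivlMr ?ltr_wpDl // mulrC. Qed.

Lemma calM_ball_gap_radius p : calM G p ->
  calM G `&` ball p (gap_radius p) = inherits_symmetries p `&` ball p (gap_radius p).
Proof.
move=> [_ p_inv]; apply/seteqP; split=> y [y_in y_ball]; split=> //;
  have y_near := ball_gap_radius y_ball.
- by case: y_in => _; apply: near_invariant_inherits y_near.
- split=> [|A GA]; first exact: near_xi_at_inj y_near.
  by have [chi p_chi] := p_inv A GA; exists chi; apply: y_in.
Qed.

End LocalStructure.

Theorem lemma2p2 (R : realType) (d : nat) (G : set 'M[R]_d) (Omega : finType) :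
  orthogonal_subgroup G -> is_submanifold (@calM R Omega d G).
Proof.
move=> [_ _ _ G_orth]; apply: locally_linear_submanifold => p p_in.
have [L L_sym] := inherits_symmetries_vspace G p.
exists (gap_radius p), L; split; first by apply: gap_radius_gt0; case: p_in.
by rewrite L_sym (calM_ball_gap_radius G_orth p_in).
Qed.
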